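(* Let $\mathcal{C}$ be a deflation-exact category and let $\mathcal{A}\subseteq\mathcal{C}$ be an admissibly deflation-percolating subcategory. If $\mathcal{B}\subseteq\mathcal{A}$ is a Serre subcategory of $\mathcal{A}$, then $\mathcal{B}\subseteq\mathcal{C}$ is an admissibly deflation-percolating subcategory.
   Context: A conflation category is an additive category with a class of kernel-cokernel pairs (closed under isomorphisms) called conflations; first map an inflation, second a deflation. A deflation-exact category is a conflation category satisfying: (R0) $1_0$ is a deflation; (R1) composites of deflations are deflations; (R2) pullbacks of deflations along arbitrary morphisms exist and are deflations. A non-empty full subcategory $\mathcal{A}$ is admissibly deflation-percolating if: (A1) for every conflation $A'\rightarrowtail A\twoheadrightarrow A''$ in $\mathcal{C}$, $A\in\mathcal{A}$ iff $A',A''\in\mathcal{A}$; (A2) every morphism $C\to A$ with $A\in\mathcal{A}$ factors as a deflation $C\twoheadrightarrow A'$ followed by an inflation $A'\rightarrowtail A$ with $A'\in\mathcal{A}$; (A3) if $a\colon C\rightarrowtail D$ is an inflation and $b\colon C\twoheadrightarrow A$ a deflation with $A\in\mathcal{A}$, the pushout of $a$ along $b$ exists and yields a deflation $D\twoheadrightarrow P$ and an inflation $A\rightarrowtail P$. For such $\mathcal{A}$, the category $\mathcal{A}$ is abelian (with short exact sequences being the conflations of $\mathcal{C}$ lying in $\mathcal{A}$). A Serre subcategory $\mathcal{B}$ of $\mathcal{A}$ is a non-empty full subcategory such that for every short exact sequence $0\to B'\to B\to B''\to 0$ in $\mathcal{A}$, $B\in\mathcal{B}$ iff $B',B''\in\mathcal{B}$.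 *)

Set Implicit Arguments.
Unset Strict Implicit.

(* Additive category.  Composition is written in diagrammatic order:
   [comp f g] is "first f, then g" (i.e. g ∘ f). *)
Record AddCat := {
  Ob : Type;
  Hom : Ob -> Ob -> Type;
  idm : forall A, Hom A A;
  comp : forall A B C, Hom A B -> Hom B C -> Hom A C;
  comp_assoc : forall A B C D (f : Hom A B) (g : Hom B C) (h : Hom C D),
      comp (comp f g) h = comp f (comp g h);
  comp_id_l : forall A B (f : Hom A B), comp (idm A) f = f;
  comp_id_r : forall A B (f : Hom A B), comp f (idm B) = f;
  hadd : forall A B, Hom A B -> Hom A B -> Hom A B;
  hzero : forall A B, Hom A B;
  hopp : forall A B, Hom A B -> Hom A B;
  hadd_assoc : forall A B (f g h : Hom A B), hadd (hadd f g) h = hadd f (hadd g h);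
  hadd_comm : forall A B (f g : Hom A B), hadd f g = hadd g f;
  hadd_zero_l : forall A B (f : Hom A B), hadd (hzero A B) f = f;
  hadd_opp_l : forall A B (f : Hom A B), hadd (hopp f) f = hzero A B;
  comp_addl : forall A B C (f g : Hom A B) (h : Hom B C),
      comp (hadd f g) h = hadd (comp f h) (comp g h);
  comp_addr : forall A B C (f : Hom A B) (g h : Hom B C),
      comp f (hadd g h) = hadd (comp f g) (comp f h);
  zobj : Ob;
  zobj_zero : idm zobj = hzero zobj zobj;
  biprod_ex : forall A B, exists (P : Ob) (i1 : Hom A P) (i2 : Hom B P)
      (p1 : Hom P A) (p2 : Hom P B),
      comp i1 p1 = idm A /\ comp i2 p2 = idm B /\
      comp i1 p2 = hzero A B /\ comp i2 p1 = hzero B A /\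
      hadd (comp p1 i1) (comp p2 i2) = idm P
}.

Arguments idm {_} _.
Arguments comp {_ _ _ _} _ _.
Arguments hzero {_} _ _.
Arguments zobj {_}.

Section Notions.
Variable C : AddCat.

Definition is_iso (A B : Ob C) (f : Hom A B) : Prop :=
  exists g : Hom B A, comp f g = idm A /\ comp g f = idm B.

Definition is_kernel (K A B : Ob C) (i : Hom K A) (p : Hom A B) : Prop :=
  comp i p = hzero K B /\
  forall X (f : Hom X A), comp f p = hzero X B ->
    exists g : Hom X K, comp g i = f /\
      forall g' : Hom X K, comp g' i = f -> g' = g.

Definition is_cokernel (K A B : Ob C) (i : Hom K A) (p : Hom A B) : Prop :=
  comp i p = hzero K B /\
  forall X (f : Hom A X), comp i f = hzero K X ->
    exists g : Hom B X, comp p g = f /\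
      forall g' : Hom B X, comp p g' = f -> g' = g.

Definition is_kernel_cokernel_pair (K A B : Ob C) (i : Hom K A) (p : Hom A B) :=
  is_kernel i p /\ is_cokernel i p.

(* Square  P --g--> B
           |        |
           q        p
           v        v
           D --f--> E     is a pullback of p along f. *)
Definition is_pullback (P B D E : Ob C) (g : Hom P B) (q : Hom P D)
    (p : Hom B E) (f : Hom D E) : Prop :=
  comp g p = comp q f /\
  forall X (u : Hom X B) (v : Hom X D), comp u p = comp v f ->
    exists w : Hom X P, (comp w g = u /\ comp w q = v) /\
      forall w' : Hom X P, comp w' g = u -> comp w' q = v -> w' = w.

(* Square  X --a--> D
           |        |
           b        b'
           v        v
           A --a'-> P     is a pushout of a along b. *)
Definition is_pushout (X D A P : Ob C) (a : Hom X D) (b : Hom X A)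
    (b' : Hom D P) (a' : Hom A P) : Prop :=
  comp a b' = comp b a' /\
  forall Y (u : Hom D Y) (v : Hom A Y), comp a u = comp b v ->
    exists w : Hom P Y, (comp b' w = u /\ comp a' w = v) /\
      forall w' : Hom P Y, comp b' w' = u -> comp a' w' = v -> w' = w.

End Notions.

Record ConfCat := {
  cat :> AddCat;
  Conf : forall (A B D : Ob cat), Hom A B -> Hom B D -> Prop;
  Conf_kc : forall A B D (i : Hom A B) (p : Hom B D),
      Conf i p -> is_kernel_cokernel_pair i p;
  Conf_iso : forall A B D A' B' D' (i : Hom A B) (p : Hom B D)
      (i' : Hom A' B') (p' : Hom B' D')
      (a : Hom A A') (b : Hom B B') (d : Hom D D'),
      is_iso a -> is_iso b -> is_iso d ->
      comp i b = comp a i' -> comp p d = comp b p' ->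
      Conf i p -> Conf i' p'
}.

Arguments Conf {_ _ _ _} _ _.

Section ConfNotions.
Variable C : ConfCat.

Definition inflation (A B : Ob C) (i : Hom A B) : Prop :=
  exists (D : Ob C) (p : Hom B D), Conf i p.

Definition deflation (B D : Ob C) (p : Hom B D) : Prop :=
  exists (A : Ob C) (i : Hom A B), Conf i p.

Definition deflation_exact : Prop :=
  deflation (idm (@zobj C)) /\
  (forall A B D (p : Hom A B) (q : Hom B D),
              deflation p -> deflation q -> deflation (comp p q)) /\
  (forall B E D (p : Hom B E) (f : Hom D E), deflation p ->
              exists (P : Ob C) (g : Hom P B) (q : Hom P D),
                is_pullback g q p f /\ deflation q).

(* Full subcategories are given by predicates on objects. *)
Definition admissibly_deflation_percolating (S : Ob C -> Prop) : Prop :=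
  (exists A, S A) /\
  (forall A' A A'' (i : Hom A' A) (p : Hom A A''), Conf i p ->
              (S A <-> S A' /\ S A'')) /\
  (forall X A (f : Hom X A), S A ->
              exists (A' : Ob C) (d : Hom X A') (m : Hom A' A),
                S A' /\ deflation d /\ inflation m /\ comp d m = f) /\
  (forall X D A (a : Hom X D) (b : Hom X A),
              inflation a -> deflation b -> S A ->
              exists (P : Ob C) (b' : Hom D P) (a' : Hom A P),
                is_pushout a b b' a' /\ deflation b' /\ inflation a').

(* Serre subcategory of the abelian category 𝒜 (given by SA), whose short
   exact sequences are the conflations of C with all three terms in 𝒜. *)
Definition serre_subcategory (SA SB : Ob C -> Prop) : Prop :=
  (exists B, SB B) /\
  (forall B, SB B -> SA B) /\
  (forall B' B B'' (i : Hom B' B) (p : Hom B B''),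
     Conf i p -> SA B' -> SA B -> SA B'' ->
     (SB B <-> SB B' /\ SB B'')).

End ConfNotions.


(* The conflations of C lying in 𝒜 are the short exact sequences of 𝒜, so
   axiom (A1) for ℬ is the Serre property once (A1) for 𝒜 puts all three
   terms in 𝒜.  For (A2), factor a map into B ∈ ℬ through some A' ∈ 𝒜 with
   A' ↣ B an inflation; its cokernel lies in 𝒜 by (A1), so A' is a subobject
   of B in 𝒜 and hence in ℬ.  (A3) for ℬ is a special case of (A3) for 𝒜. *)

Section SerreSubcategory.

Context {C : ConfCat} {SA SB : Ob C -> Prop}.

Hypothesis SA_conf : forall {A' A A''} {i : Hom A' A} {p : Hom A A''},
  Conf i p -> (SA A <-> SA A' /\ SA A'').
Hypothesis SB_sub : forall {B}, SB B -> SA B.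
Hypothesis SB_serre : forall {B' B B''} {i : Hom B' B} {p : Hom B B''},
  Conf i p -> SA B' -> SA B -> SA B'' -> (SB B <-> SB B' /\ SB B'').

Lemma serre_conf {A' A A'' : Ob C} {i : Hom A' A} {p : Hom A A''} :
  Conf i p -> (SB A <-> SB A' /\ SB A'').
Proof.
  intros Hc. split.
  - intros HB.
    destruct (proj1 (SA_conf Hc) (SB_sub HB)) as [HA' HA''].
    exact (proj1 (SB_serre Hc HA' (SB_sub HB) HA'') HB).
  - intros [HB' HB''].
    assert (HA : SA A) by (apply (SA_conf Hc); auto).
    exact (proj2 (SB_serre Hc (SB_sub HB') HA (SB_sub HB'')) (conj HB' HB'')).
Qed.

Lemma serre_inflation_source {A' B : Ob C} {m : Hom A' B} :
  inflation m -> SA A' -> SB B -> SB A'.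
Proof.
  intros [D [p Hc]] HA' HB.
  destruct (proj1 (SA_conf Hc) (SB_sub HB)) as [_ HD].
  exact (proj1 (proj1 (SB_serre Hc HA' (SB_sub HB) HD) HB)).
Qed.

End SerreSubcategory.

Theorem mainTheorem4 (C : ConfCat) (SA SB : Ob C -> Prop) :
  deflation_exact C ->
  admissibly_deflation_percolating SA ->
  serre_subcategory SA SB ->
  admissibly_deflation_percolating SB.
Proof.
  intros _ [_ [A1 [A2 A3]]] [SB_ne [SB_sub SB_serre]].
  split; [exact SB_ne | split; [| split]].
  - intros A' A A'' i p Hc.
    exact (serre_conf A1 SB_sub SB_serre Hc).
  - intros X B f HB.
    destruct (A2 X B f (SB_sub B HB)) as [A' [d [m [HA' [Hd [Hm Hf]]]]]].
    exists A', d, m.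
    split; [exact (serre_inflation_source A1 SB_sub SB_serre Hm HA' HB) | auto].
  - intros X D B a b Ha Hb HB.
    exact (A3 X D B a b Ha Hb (SB_sub B HB)).
Qed.
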